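(* Consider the system of ordinary differential equations \[ \dot u=r_{1}u(1-u)-a_{12}uv-a_{13}uw,\qquad \dot v=r_{2}v(1-v)+a_{21}uv,\qquad \dot w=-\mu w+a_{31}uw, \] with all parameters $r_1,r_2,\mu,a_{12},a_{13},a_{21},a_{31}$ positive. If $r_1\le a_{12}$, then every solution with positive initial data $u(0),v(0),w(0)>0$ satisfies $\lim_{t\to\infty}u(t)=0$ and $\lim_{t\to\infty}w(t)=0$. *)

From Stdlib Require Import Reals.
From Coquelicot Require Import Coquelicot.
Open Scope R_scope.

Definition is_solution (r1 r2 mu a12 a13 a21 a31 : R) (u v w : R -> R) : Prop :=
  (forall t, 0 < t ->
     is_derive u t (r1 * u t * (1 - u t) - a12 * u t * v t - a13 * u t * w t) /\
     is_derive v t (r2 * v t * (1 - v t) + a21 * u t * v t) /\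
     is_derive w t (- mu * w t + a31 * u t * w t)) /\
  filterlim u (at_right 0) (locally (u 0)) /\
  filterlim v (at_right 0) (locally (v 0)) /\
  filterlim w (at_right 0) (locally (w 0)).

From Stdlib Require Import Reals Lra Ranalysis5.
From Coquelicot Require Import Coquelicot.
Open Scope R_scope.

(* Each step compares a quantity y with a constant c through y' <= k (c - y)
   (or >=) with k > 0: then (y - c) e^{kt} is monotone, so eventually
   y <= c + eps (or y >= c - eps).  For 1/v with k = r2 and c = 1 this gives
   v >= 1 - eps eventually.  Since a12 >= r1, the term r1 - a12 v - a13 w is
   then at most r1 eps/2, which turns the equation for u into
   (1/u)' >= (r1 eps/2) (2/eps - 1/u), hence eventually u <= eps.  Once
   a31 u <= mu/2 we get w' <= -(mu/2) w.  Positivity holds because each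
   equation has the form f' = f g: where |g| <= M, f^2 e^{2Mt} is
   nondecreasing, so f cannot reach 0. *)

Lemma is_derive_continuity_pt (f : R -> R) (x l : R) :
  is_derive f x l -> continuity_pt f x.
Proof.
  intros hf. apply continuity_pt_filterlim. apply (ex_derive_continuous f x). now exists l.
Qed.

Lemma nonincreasing_of_derive_nonpos (f df : R -> R) (a b : R) : a <= b ->
  (forall t, a <= t <= b -> is_derive f t (df t)) ->
  (forall t, a <= t <= b -> df t <= 0) -> f b <= f a.
Proof.
  intros hab hd hneg.
  destruct (MVT_gen f a b df) as [c [hc hmvt]];
    rewrite ?Rmin_left, ?Rmax_right in * by exact hab.
  - intros t ht. apply hd. lra.
  - intros t ht. exact (is_derive_continuity_pt _ _ _ (hd t ht)).
  - specialize (hneg c hc). nra.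
Qed.

Lemma relaxation_nonincreasing (y dy : R -> R) (k c a b : R) : a <= b ->
  (forall t, a <= t <= b -> is_derive y t (dy t)) ->
  (forall t, a <= t <= b -> dy t <= k * (c - y t)) ->
  (y b - c) * exp (k * b) <= (y a - c) * exp (k * a).
Proof.
  intros hab hd hle.
  apply (nonincreasing_of_derive_nonpos (fun t => (y t - c) * exp (k * t))
           (fun t => (dy t + k * (y t - c)) * exp (k * t))); [exact hab | |].
  - intros t ht. auto_derive; [exists (dy t); exact (hd t ht) |].
    rewrite (is_derive_unique (fun s : R => y s) _ _ (hd t ht)). ring.
  - intros t ht. specialize (hle t ht). pose proof (exp_pos (k * t)). nra.
Qed.

Lemma relaxation_nondecreasing (y dy : R -> R) (k c a b : R) : a <= b ->
  (forall t, a <= t <= b -> is_derive y t (dy t)) ->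
  (forall t, a <= t <= b -> k * (c - y t) <= dy t) ->
  (y a - c) * exp (k * a) <= (y b - c) * exp (k * b).
Proof.
  intros hab hd hge.
  enough ((- y b - - c) * exp (k * b) <= (- y a - - c) * exp (k * a)) by lra.
  apply (relaxation_nonincreasing (fun t => - y t) (fun t => - dy t)); [exact hab | |].
  - intros t ht. auto_derive; [exists (dy t); exact (hd t ht) |].
    rewrite (is_derive_unique (fun s : R => y s) _ _ (hd t ht)). ring.
  - intros t ht. specialize (hge t ht). lra.
Qed.

Lemma nonvanishing_of_derive_mul (f g : R -> R) (a b : R) : a <= b ->
  (forall t, a <= t <= b -> is_derive f t (f t * g t)) ->
  (forall t, a <= t <= b -> continuity_pt g t) ->
  f a <> 0 -> f b <> 0.
Proof.
  intros hab hd hg hfa hfb.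
  destruct (continuity_ab_maj (fun t => Rabs (g t)) a b hab) as [m [hm _]].
  { intros t ht.
    apply (continuity_pt_comp g Rabs); [exact (hg t ht) | apply Rcontinuity_abs]. }
  set (M := Rabs (g m)).
  assert (hsq : (f a * f a - 0) * exp (2 * M * a) <= (f b * f b - 0) * exp (2 * M * b)).
  { apply (relaxation_nondecreasing (fun t => f t * f t) (fun t => 2 * (f t * f t) * g t));
      [exact hab | |].
    - intros t ht. auto_derive; [repeat split; exists (f t * g t); exact (hd t ht) |].
      rewrite (is_derive_unique (fun s : R => f s) _ _ (hd t ht)). ring.
    - intros t ht. specialize (hm t ht). fold M in hm.
      pose proof (Rle_abs (- g t)). rewrite Rabs_Ropp in *.
      assert (0 <= f t * f t) by nra. nra. }
  rewrite hfb in hsq.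
  assert (0 < f a * f a) by exact (Rsqr_pos_lt _ hfa).
  pose proof (exp_pos (2 * M * a)). nra.
Qed.

Lemma pos_of_derive_mul (f g : R -> R) :
  (forall t, 0 < t -> is_derive f t (f t * g t)) ->
  (forall t, 0 < t -> continuity_pt g t) ->
  filterlim f (at_right 0) (locally (f 0)) -> 0 < f 0 ->
  forall t, 0 < t -> 0 < f t.
Proof.
  intros hd hg hlim hf0 t ht.
  assert (hpos : at_right 0 (fun s => 0 < f s)).
  { apply hlim. exact (locally_open _ _ (open_gt 0) (fun _ h => h) _ hf0). }
  assert (hsmall : at_right 0 (fun s => 0 < s < t)).
  { exact (locally_open _ _ (open_lt t) (fun s hs h0 => conj h0 hs) 0 ht). }
  destruct (filter_ex _ (filter_and _ _ hsmall hpos)) as [e [he hfe]].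
  assert (hnz : forall s, e <= s <= t -> f s <> 0).
  { intros s hs. apply (nonvanishing_of_derive_mul f g e s); [lra | | | lra];
      intros x hx; [apply hd | apply hg]; lra. }
  destruct (Rlt_or_le 0 (f t)) as [hft | hft]; [exact hft | exfalso].
  destruct (IVT_interv (fun s => - f s) e t) as [z [hz hz0]].
  - intros s hs. apply continuity_pt_opp, (is_derive_continuity_pt _ _ _ (hd s ltac:(lra))).
  - lra.
  - lra.
  - pose proof (hnz t ltac:(lra)). lra.
  - apply (hnz z hz). lra.
Qed.

Lemma is_lim_exp_decay (C k : R) : 0 < k -> is_lim (fun t => C * exp (- k * t)) p_infty 0.
Proof.
  intros hk.
  replace (Finite 0) with (Rbar_mult C 0) by (simpl; f_equal; ring).
  apply is_lim_scal_l, (is_lim_ext (fun t => exp (- k * t + 0))).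
  { intros t. now rewrite Rplus_0_r. }
  apply is_lim_comp_lin; [simpl | lra].
  destruct (Rle_dec 0 (- k)); [exfalso; lra | exact is_lim_exp_m].
Qed.

Lemma eventually_le_of_derive_le (y dy : R -> R) (k c : R) : 0 < k ->
  Rbar_locally p_infty (fun t => is_derive y t (dy t) /\ dy t <= k * (c - y t)) ->
  forall eps, 0 < eps -> Rbar_locally p_infty (fun t => y t <= c + eps).
Proof.
  intros hk [a ha] eps heps.
  set (C := (y (a + 1) - c) * exp (k * (a + 1))).
  destruct (proj2 (is_lim_spec _ _ _) (is_lim_exp_decay C k hk) (mkposreal eps heps))
    as [b hb].
  exists (Rmax (a + 1) b). intros t ht.
  pose proof (Rmax_l (a + 1) b). pose proof (Rmax_r (a + 1) b).
  assert (hmono : (y t - c) * exp (k * t) <= C).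
  { apply (relaxation_nonincreasing y dy); [lra | |]; intros s hs; apply ha; lra. }
  assert (hdecay : y t - c <= C * exp (- k * t)).
  { replace (y t - c) with ((y t - c) * exp (k * t) * exp (- k * t)).
    - apply Rmult_le_compat_r; [left; apply exp_pos | exact hmono].
    - rewrite Rmult_assoc, <- exp_plus.
      replace (k * t + - k * t) with 0 by ring. rewrite exp_0. ring. }
  specialize (hb t ltac:(lra)). simpl in hb.
  pose proof (Rle_abs (C * exp (- k * t) - 0)). lra.
Qed.

Lemma eventually_ge_of_derive_ge (y dy : R -> R) (k c : R) : 0 < k ->
  Rbar_locally p_infty (fun t => is_derive y t (dy t) /\ k * (c - y t) <= dy t) ->
  forall eps, 0 < eps -> Rbar_locally p_infty (fun t => c - eps <= y t).
Proof.
  intros hk hev eps heps.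
  apply (filter_imp (fun t => - y t <= - c + eps)); [intros t ht; lra |].
  apply (eventually_le_of_derive_le _ (fun t => - dy t) k); [exact hk | | exact heps].
  revert hev. apply filter_imp. intros t [hd hge]. split; [| lra].
  auto_derive; [exists (dy t); exact hd |].
  rewrite (is_derive_unique (fun s : R => y s) _ _ hd). ring.
Qed.

Lemma is_lim_0_of_eventually_le (f : R -> R) :
  Rbar_locally p_infty (fun t => 0 < f t) ->
  (forall eps, 0 < eps -> Rbar_locally p_infty (fun t => f t <= eps)) ->
  is_lim f p_infty 0.
Proof.
  intros hpos hle. apply is_lim_spec. intros [eps heps].
  generalize (filter_and _ _ hpos (hle (eps / 2) ltac:(lra))). apply filter_imp.
  intros t [h0 h1]. simpl. rewrite Rminus_0_r, Rabs_pos_eq; lra.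
Qed.

Section PositiveSolution.

Variables (r1 r2 mu a12 a13 a21 a31 : R) (u v w : R -> R).
Hypotheses (hr1 : 0 < r1) (hr2 : 0 < r2) (hmu : 0 < mu)
  (ha13 : 0 < a13) (ha21 : 0 < a21) (ha31 : 0 < a31).
Hypothesis hsol : is_solution r1 r2 mu a12 a13 a21 a31 u v w.
Hypotheses (hu0 : 0 < u 0) (hv0 : 0 < v 0) (hw0 : 0 < w 0).
Hypothesis hr : r1 <= a12.

Lemma solution_continuity_pt (g : R -> R) :
  (forall t, ex_derive u t -> ex_derive v t -> ex_derive w t -> ex_derive g t) ->
  forall t, 0 < t -> continuity_pt g t.
Proof.
  intros hg t ht. destruct hsol as [hd _]. destruct (hd t ht) as [hu [hv hw]].
  apply continuity_pt_filterlim, (ex_derive_continuous g t), hg;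
    eexists; eassumption.
Qed.

Lemma solution_pos t : 0 < t -> 0 < u t /\ 0 < v t /\ 0 < w t.
Proof.
  destruct hsol as [hd [hlu [hlv hlw]]].
  intros ht. repeat split.
  - apply (pos_of_derive_mul u (fun s => r1 * (1 - u s) - a12 * v s - a13 * w s));
      [| apply solution_continuity_pt; intros; auto_derive; tauto
       | exact hlu | exact hu0 | exact ht].
    intros s hs.
    replace (u s * _) with (r1 * u s * (1 - u s) - a12 * u s * v s - a13 * u s * w s) by ring.
    apply hd, hs.
  - apply (pos_of_derive_mul v (fun s => r2 * (1 - v s) + a21 * u s));
      [| apply solution_continuity_pt; intros; auto_derive; tauto
       | exact hlv | exact hv0 | exact ht].
    intros s hs. replace (v s * _) with (r2 * v s * (1 - v s) + a21 * u s * v s) by ring.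
    apply hd, hs.
  - apply (pos_of_derive_mul w (fun s => - mu + a31 * u s));
      [| apply solution_continuity_pt; intros; auto_derive; tauto
       | exact hlw | exact hw0 | exact ht].
    intros s hs. replace (w s * _) with (- mu * w s + a31 * u s * w s) by ring.
    apply hd, hs.
Qed.

Lemma inv_v_eventually_le eta : 0 < eta ->
  Rbar_locally p_infty (fun t => / v t <= 1 + eta).
Proof.
  intros heta.
  apply (eventually_le_of_derive_le (fun t => / v t)
           (fun t => r2 * (1 - / v t) - a21 * u t / v t) r2 1 hr2); [| exact heta].
  exists 0. intros t ht.
  destruct hsol as [hd _]. destruct (hd t ht) as [_ [hv _]].
  destruct (solution_pos t ht) as [hut [hvt _]].
  split.
  - auto_derive; [repeat split; [eexists; exact hv | lra] |].
    rewrite (is_derive_unique (fun s : R => v s) _ _ hv). field. lra.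
  - assert (0 < a21 * u t / v t) by (apply Rdiv_lt_0_compat; nra). lra.
Qed.

Lemma u_eventually_le eps : 0 < eps -> Rbar_locally p_infty (fun t => u t <= eps).
Proof.
  intros heps.
  assert (hev : Rbar_locally p_infty (fun t => 0 < t /\ / v t <= 1 + eps / 2)).
  { apply filter_and; [exists 0; auto | apply inv_v_eventually_le; lra]. }
  apply (filter_imp (fun t => 0 < t /\ 2 / eps - / eps <= / u t)).
  { intros t [ht hle]. replace (2 / eps - / eps) with (/ eps) in hle by (field; lra).
    pose proof (proj1 (solution_pos t ht)).
    rewrite <- (Rinv_inv (u t)), <- (Rinv_inv eps).
    apply Rinv_le_contravar; [apply Rinv_0_lt_compat; lra | exact hle]. }
  apply filter_and; [exists 0; auto |].
  apply (eventually_ge_of_derive_ge (fun t => / u t)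
           (fun t => r1 + (a12 * v t + a13 * w t - r1) / u t) (r1 * eps / 2) (2 / eps));
    [nra | | apply Rinv_0_lt_compat; lra].
  revert hev. apply filter_imp. intros t [ht hvle].
  destruct hsol as [hd _]. destruct (hd t ht) as [hu _].
  destruct (solution_pos t ht) as [hut [hvt hwt]].
  split.
  - auto_derive; [repeat split; [eexists; exact hu | lra] |].
    rewrite (is_derive_unique (fun s : R => u s) _ _ hu). field. lra.
  - assert (hv1 : 1 - v t <= eps / 2).
    { assert (v t * / v t = 1) by (field; lra). nra. }
    assert (hgap : 0 <= (a12 * v t + a13 * w t - r1 + r1 * eps / 2) / u t).
    { apply Rdiv_le_0_compat; [nra | lra]. }
    replace (r1 * eps / 2 * (2 / eps - / u t))
      with (r1 + (a12 * v t + a13 * w t - r1) / u t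
            - (a12 * v t + a13 * w t - r1 + r1 * eps / 2) / u t) by (field; lra).
    lra.
Qed.

Lemma w_eventually_le eps : 0 < eps -> Rbar_locally p_infty (fun t => w t <= eps).
Proof.
  intros heps.
  apply (filter_imp (fun t => w t <= 0 + eps)); [intros t; lra |].
  apply (eventually_le_of_derive_le _ (fun t => - mu * w t + a31 * u t * w t) (mu / 2));
    [lra | | exact heps].
  assert (hev : Rbar_locally p_infty (fun t => 0 < t /\ u t <= mu / (2 * a31))).
  { apply filter_and; [exists 0; auto | apply u_eventually_le, Rdiv_lt_0_compat; lra]. }
  revert hev. apply filter_imp. intros t [ht hut].
  destruct hsol as [hd _]. destruct (hd t ht) as [_ [_ hw]].
  destruct (solution_pos t ht) as [_ [_ hwt]].
  split; [exact hw |].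
  assert (a31 * u t <= mu / 2).
  { replace (mu / 2) with (a31 * (mu / (2 * a31))) by (field; lra).
    apply Rmult_le_compat_l; lra. }
  nra.
Qed.

Lemma u_tends_to_0 : is_lim u p_infty 0.
Proof.
  apply is_lim_0_of_eventually_le; [| exact u_eventually_le].
  exists 0. intros t ht. exact (proj1 (solution_pos t ht)).
Qed.

Lemma w_tends_to_0 : is_lim w p_infty 0.
Proof.
  apply is_lim_0_of_eventually_le; [| exact w_eventually_le].
  exists 0. intros t ht. exact (proj2 (proj2 (solution_pos t ht))).
Qed.

End PositiveSolution.

Theorem lemma2 (r1 r2 mu a12 a13 a21 a31 : R) (u v w : R -> R)
  (hr1 : 0 < r1) (hr2 : 0 < r2) (hmu : 0 < mu) (ha12 : 0 < a12)
  (ha13 : 0 < a13) (ha21 : 0 < a21) (ha31 : 0 < a31)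
  (hsol : is_solution r1 r2 mu a12 a13 a21 a31 u v w)
  (hu0 : 0 < u 0) (hv0 : 0 < v 0) (hw0 : 0 < w 0)
  (hr : r1 <= a12) :
  is_lim u p_infty 0 /\ is_lim w p_infty 0.
Proof.
  (* [ha12] is implied by [hr1] and [hr]. *)
  split.
  - apply (u_tends_to_0 r1 r2 mu a12 a13 a21 a31 u v w); assumption.
  - apply (w_tends_to_0 r1 r2 mu a12 a13 a21 a31 u v w); assumption.
Qed.
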